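(* Let $y,p\in\mathbb R^2$ and $a,b>0$. For $R\in\mathbb R^{2\times2}$ and $\lambda>0$ define \[ G(R,\lambda):=p^TR^T\begin{pmatrix}\frac{\lambda+1}{a\lambda+b}&0\\0&\frac{\lambda+1}{a+b\lambda}\end{pmatrix}Ry. \] Then \[ \operatorname{cl}G(\mathrm O(2),(0,\infty))=\frac12\Big(\frac1a+\frac1b\Big)y^Tp+[-1,1]\cdot\frac12\Big|\frac1a-\frac1b\Big|\,\|y\|_2\|p\|_2. \]
   Context: $\mathrm O(2)=\{R\in\mathbb R^{2\times2}:R^TR=I_2\}$; $\operatorname{cl}$ denotes closure in $\mathbb R$; $\|\cdot\|_2$ Euclidean norm; $c+[-1,1]\cdot t$ denotes $[c-t,c+t]$. *)

From HB Require Import structures.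
From mathcomp Require Import all_boot all_order all_algebra.
From mathcomp Require Import all_classical all_reals all_analysis.
Set Implicit Arguments. Unset Strict Implicit. Unset Printing Implicit Defensive.
Import Order.TTheory GRing.Theory Num.Theory.
Local Open Scope ring_scope.
Local Open Scope classical_set_scope.

Definition O2 (R : realType) : set 'M[R]_2 := [set Q | Q^T *m Q = 1%:M].

Definition norm2 (R : realType) (v : 'cV[R]_2) : R :=
  Num.sqrt (\sum_(i < 2) v i 0 ^+ 2).

Definition dot2 (R : realType) (v w : 'cV[R]_2) : R := (v^T *m w) 0 0.

Definition Gfun (R : realType) (a b : R) (y p : 'cV[R]_2) (Q : 'M[R]_2) (l : R) : R :=
  (p^T *m Q^T *m
     diag_mx (\row_(i < 2) (if i == 0 then (l + 1) / (a * l + b)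
                            else (l + 1) / (a + b * l)))
   *m Q *m y) 0 0.

(* Put u = Q p and v = Q y.  Then G(Q, l) = g(l) u0 v0 + g'(l) u1 v1 with gains
   g(l) = (l+1)/(a l + b) and g'(l) = (l+1)/(b l + a), which for l >= 0 lie between
   1/a and 1/b and tend to 1/b and 1/a as l -> 0.  Since Q preserves the scalar
   product and the norms, G(Q, l) differs from the midpoint (1/a + 1/b)/2 y.p by at
   most |1/a - 1/b|/2 (|u0 v0| + |u1 v1|) <= |1/a - 1/b|/2 |y| |p| (Cauchy-Schwarz),
   and the interval is closed.  Conversely, for the reflections Q = [[c, s], [s, -c]]
   the sum u0 v0 + u1 v1 = y.p is fixed while the difference u0 v0 - u1 v1 sweeps
   [-|y| |p|, |y| |p|], so every point of the interval is a value G(Q, 0), which is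
   the limit of G(Q, l) as l -> 0+. *)

From HB Require Import structures.
From mathcomp Require Import all_boot all_order all_algebra.
From mathcomp Require Import all_classical all_reals all_analysis.
From mathcomp Require Import ring lra.
Import Order.TTheory GRing.Theory Num.Theory.
Import numFieldNormedType.Exports.
Set Implicit Arguments. Unset Strict Implicit. Unset Printing Implicit Defensive.
Local Open Scope ring_scope.
Local Open Scope classical_set_scope.

Lemma ord2P (i : 'I_2) : i = 0 \/ i = 1.
Proof. by case: i => [[|[|//]]] lt_i2; [left | right]; apply: val_inj. Qed.

Lemma sum_ord2 (V : nmodType) (F : 'I_2 -> V) : \sum_(i < 2) F i = F 0 + F 1.
Proof. by rewrite !big_ord_recl big_ord0 addr0; congr (F _ + F _); apply: val_inj. Qed.

Lemma mulmx_cV2E (R : pzRingType) (Q : 'M[R]_2) (v : 'cV[R]_2) (i : 'I_2) :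
  (Q *m v) i 0 = Q i 0 * v 0 0 + Q i 1 * v 1 0.
Proof. by rewrite mxE sum_ord2. Qed.

Section Coordinates.
Variable R : realType.

Lemma dot2E (u v : 'cV[R]_2) : dot2 u v = u 0 0 * v 0 0 + u 1 0 * v 1 0.
Proof. by rewrite /dot2 mxE sum_ord2 !mxE. Qed.

Lemma norm2E (v : 'cV[R]_2) : norm2 v = Num.sqrt (v 0 0 ^+ 2 + v 1 0 ^+ 2).
Proof. by rewrite /norm2 sum_ord2. Qed.

Lemma dot2_O2 (Q : 'M[R]_2) (u v : 'cV[R]_2) :
  O2 Q -> dot2 (Q *m u) (Q *m v) = dot2 u v.
Proof. by move=> QQ; rewrite /dot2 trmx_mul mulmxA -(mulmxA _ _ Q) QQ mulmx1. Qed.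

Lemma norm2_dot (v : 'cV[R]_2) : norm2 v = Num.sqrt (dot2 v v).
Proof. by rewrite norm2E dot2E !expr2. Qed.

Lemma norm2_O2 (Q : 'M[R]_2) (v : 'cV[R]_2) : O2 Q -> norm2 (Q *m v) = norm2 v.
Proof. by move=> QQ; rewrite !norm2_dot dot2_O2. Qed.

End Coordinates.

Definition gain {R : realFieldType} (a b l : R) : R := (l + 1) / (a * l + b).

Lemma GfunE (R : realType) (a b : R) (y p : 'cV[R]_2) (Q : 'M[R]_2) (l : R) :
  Gfun a b y p Q l = gain a b l * ((Q *m p) 0 0 * (Q *m y) 0 0)
                   + gain b a l * ((Q *m p) 1 0 * (Q *m y) 1 0).
Proof.
rewrite /Gfun -trmx_mul -mulmxA; move: (Q *m p) (Q *m y) => u v.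
rewrite mxE sum_ord2 !mxE !sum_ord2 !mxE /gain [a + _]addrC /=.
by rewrite !mulr1n !mulr0n; ring.
Qed.

Lemma dev_mid_le (R : realFieldType) (A B d : R) : (d - A) * (d - B) <= 0 ->
  `|d - 2^-1 * (A + B)| <= 2^-1 * `|A - B|.
Proof.
move=> h; rewrite -ler_sqr ?nnegrE ?mulr_ge0 ?invr_ge0 //.
rewrite real_normK ?num_real // exprMn real_normK ?num_real //.
have -> : (d - 2^-1 * (A + B)) ^+ 2 = (d - A) * (d - B) + 2^-1 ^+ 2 * (A - B) ^+ 2.
  by field.
by rewrite gerDr.
Qed.

Section Gain.
Variables (R : realFieldType) (a b : R).
Hypotheses (ha : 0 < a) (hb : 0 < b).

Lemma gain_between (l : R) : 0 <= l -> (gain a b l - a^-1) * (gain a b l - b^-1) <= 0.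
Proof.
move=> hl; have hD : 0 < a * l + b.
  by apply: ltr_wpDl => //; rewrite mulr_ge0 // ltW.
have -> : (gain a b l - a^-1) * (gain a b l - b^-1)
   = - (l * (a - b) ^+ 2) / (a * b * (a * l + b) ^+ 2).
  by rewrite /gain; field; apply/and3P; split; rewrite ?gt_eqF.
apply: mulr_le0_ge0; first by rewrite oppr_le0 mulr_ge0 ?sqr_ge0.
by rewrite invr_ge0 mulr_ge0 ?sqr_ge0 // mulr_ge0 ?ltW.
Qed.

Lemma gain_dev (l : R) : 0 <= l ->
  `|gain a b l - 2^-1 * (a^-1 + b^-1)| <= 2^-1 * `|a^-1 - b^-1|.
Proof. by move=> hl; apply/dev_mid_le/gain_between. Qed.

End Gain.

Lemma abs_dot2_le (R : realType) (u v : 'cV[R]_2) :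
  `|u 0 0 * v 0 0| + `|u 1 0 * v 1 0| <= norm2 u * norm2 v.
Proof.
rewrite !norm2E -sqrtrM ?addr_ge0 ?sqr_ge0 //.
rewrite -[X in X <= _]ger0_norm ?addr_ge0 // -sqrtr_sqr; apply: ler_wsqrtr.
move: (u 0 0) (u 1 0) (v 0 0) (v 1 0) => u0 u1 v0 v1.
have normK (x : R) : `|x| ^+ 2 = x ^+ 2 by rewrite real_normK ?num_real.
have cross : `|u0 * v0| * `|u1 * v1| = `|u0 * v1| * `|u1 * v0|.
  by rewrite -!normrM; congr `|_|; ring.
have amgm : 0 <= (`|u0 * v1| - `|u1 * v0|) ^+ 2 by apply: sqr_ge0.
have := normK (u0 * v0); have := normK (u1 * v1).
have := normK (u0 * v1); have := normK (u1 * v0).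
rewrite !exprMn; nra.
Qed.

Lemma Gfun_dev (R : realType) (a b : R) (y p : 'cV[R]_2) (Q : 'M[R]_2) (l : R) :
  0 < a -> 0 < b -> O2 Q -> 0 <= l ->
  `|Gfun a b y p Q l - 2^-1 * (a^-1 + b^-1) * dot2 y p|
     <= 2^-1 * `|a^-1 - b^-1| * norm2 y * norm2 p.
Proof.
move=> ha hb QQ hl.
rewrite GfunE -(dot2_O2 y p QQ) -(norm2_O2 y QQ) -(norm2_O2 p QQ) dot2E.
move: (Q *m y) (Q *m p) => v u.
set m := 2^-1 * _; set r := 2^-1 * _.
have dev1 : `|gain a b l - m| <= r by exact: gain_dev.
have dev2 : `|gain b a l - m| <= r.
  by rewrite /m /r [a^-1 + _]addrC [`|a^-1 - _|]distrC; exact: gain_dev.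
have -> : gain a b l * (u 0 0 * v 0 0) + gain b a l * (u 1 0 * v 1 0)
          - m * (v 0 0 * u 0 0 + v 1 0 * u 1 0)
        = (gain a b l - m) * (u 0 0 * v 0 0) + (gain b a l - m) * (u 1 0 * v 1 0).
  by ring.
have r_ge0 : 0 <= r by rewrite mulr_ge0 ?invr_ge0.
apply: le_trans (ler_normD _ _) _; rewrite (normrM (_ - m)) (normrM (_ - m)).
apply: le_trans (_ : r * (`|u 0 0 * v 0 0| + `|u 1 0 * v 1 0|) <= _).
  by rewrite mulrDr; apply: lerD; apply: ler_wpM2r.
by rewrite -mulrA [norm2 v * _]mulrC; apply/ler_wpM2l/abs_dot2_le.
Qed.

Lemma gain0 (R : realFieldType) (a b : R) : gain a b 0 = b^-1.
Proof. by rewrite /gain mulr0 !add0r div1r. Qed.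

Lemma gain_continuous (R : realType) (a b l0 : R) : a * l0 + b != 0 ->
  {for l0, continuous (gain a b)}.
Proof.
move=> hD; apply: cvgM.
  by apply: cvgD; [exact: cvg_id | exact: cvg_cst].
apply: cvgV => //; apply: cvgD; last exact: cvg_cst.
by apply: cvgMr; exact: cvg_id.
Qed.

Lemma Gfun_cvg0 (R : realType) (a b : R) (y p : 'cV[R]_2) (Q : 'M[R]_2) :
  a != 0 -> b != 0 -> Gfun a b y p Q l @[l --> 0^'+] --> Gfun a b y p Q 0.
Proof.
move=> a0 b0; apply: cvg_at_right_filter.
have -> : Gfun a b y p Q = fun l => gain a b l * ((Q *m p) 0 0 * (Q *m y) 0 0)
                                   + gain b a l * ((Q *m p) 1 0 * (Q *m y) 1 0).
  by apply/funext => l; rewrite GfunE.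
by apply: cvgD; apply: cvgMl; apply: gain_continuous; rewrite mulr0 add0r.
Qed.

Lemma double_angle_surj (R : rcfType) (C S : R) : C ^+ 2 + S ^+ 2 = 1 ->
  exists c s : R, [/\ c ^+ 2 + s ^+ 2 = 1, c ^+ 2 - s ^+ 2 = C & 2 * c * s = S].
Proof.
move=> unit; have S2 : S ^+ 2 = 1 - C ^+ 2 by rewrite -unit addrC addKr.
have [C1|C1] := eqVneq C (-1).
  have S0 : S = 0 by apply/eqP; rewrite -sqrf_eq0 S2 C1 sqrrN expr1n subrr.
  by exists 0, 1; rewrite C1 S0; split; rewrite ?mulr0 ?mul0r //; ring.
have C1' : 1 + C != 0 by rewrite addrC addr_eq0.
have C1'' : 0 < 1 + C.
  have C2 : C ^+ 2 <= 1 by rewrite -unit lerDl sqr_ge0.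
  by rewrite lt_neqAle eq_sym C1' /=; nra.
pose n := Num.sqrt (2 * (1 + C)).
have n2 : n ^+ 2 = 2 * (1 + C) by rewrite sqr_sqrtr // mulr_ge0 // ltW.
have n0 : n != 0 by rewrite -sqrf_eq0 n2 mulf_neq0.
exists ((1 + C) / n), (S / n); rewrite !expr_div_n n2 S2; split; try by field.
have -> : 2 * ((1 + C) / n) * (S / n) = 2 * (1 + C) * S / n ^+ 2 by field.
by rewrite n2; field.
Qed.

Lemma unit_combination (R : rcfType) (A B w : R) : w ^+ 2 <= A ^+ 2 + B ^+ 2 ->
  exists C S : R, C ^+ 2 + S ^+ 2 = 1 /\ C * A + S * B = w.
Proof.
move=> hw; set N2 := A ^+ 2 + B ^+ 2 in hw *.
have [N0|N0] := eqVneq N2 0.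
  have sq0 (x : R) : x ^+ 2 <= N2 -> x = 0.
    by rewrite N0 => hx; apply/eqP; rewrite -sqrf_eq0 eq_le hx sqr_ge0.
  have hA : A = 0 by apply: sq0; rewrite lerDl sqr_ge0.
  have hB : B = 0 by apply: sq0; rewrite lerDr sqr_ge0.
  by exists 1, 0; rewrite hA hB (sq0 w hw); split; ring.
pose r := Num.sqrt (N2 - w ^+ 2).
have r2 : r ^+ 2 = N2 - w ^+ 2 by rewrite sqr_sqrtr // subr_ge0.
(* [(C, S)] is [w / N2] times [(A, B)] plus [r / N2] times the orthogonal [(B, -A)]. *)
exists ((w * A + B * r) / N2), ((w * B - A * r) / N2); split.
  rewrite !expr_div_n -mulrDl.
  have -> : (w * A + B * r) ^+ 2 + (w * B - A * r) ^+ 2 = (w ^+ 2 + r ^+ 2) * N2.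
    by rewrite /N2; ring.
  by rewrite r2 subrKC -expr2 divff // expf_neq0.
by rewrite /N2 in N0 *; field.
Qed.

Lemma factor_bounded (R : realFieldType) (z k N : R) : 0 <= N -> `|z| <= `|k| * N ->
  exists w, `|w| <= N /\ z = k * w.
Proof.
move=> N0; have [->|k0] := eqVneq k 0.
  by rewrite normr0 mul0r normr_le0 => /eqP ->; exists 0; rewrite normr0 mulr0.
move=> hz; exists (z / k); split; last by rewrite mulrC divfK.
by rewrite normf_div ler_pdivrMr ?normr_gt0 // mulrC.
Qed.

Definition reflection {R : realType} (c s : R) : 'M[R]_2 :=
  \matrix_(i, j) if i == 0 then (if j == 0 then c else s)
                 else (if j == 0 then s else - c).

Lemma reflection_O2 (R : realType) (c s : R) :
  c ^+ 2 + s ^+ 2 = 1 -> O2 (reflection c s).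
Proof.
move=> unit; apply/matrixP => i j; rewrite mxE sum_ord2 !mxE.
by case: (ord2P i) => ->; case: (ord2P j) => ->; rewrite /= -?unit; ring.
Qed.

Lemma Gfun0_attains (R : realType) (a b : R) (y p : 'cV[R]_2) (x : R) :
  `|x - 2^-1 * (a^-1 + b^-1) * dot2 y p| <= 2^-1 * `|a^-1 - b^-1| * norm2 y * norm2 p ->
  exists2 Q, O2 Q & Gfun a b y p Q 0 = x.
Proof.
set m := 2^-1 * _; set k := 2^-1 * (b^-1 - a^-1).
have -> : 2^-1 * `|a^-1 - b^-1| = `|k|.
  by rewrite normrM ger0_norm ?invr_ge0 // distrC.
rewrite -mulrA => /factor_bounded [|w [w_le /eqP]].
  by rewrite mulr_ge0 // norm2E sqrtr_ge0.
rewrite subr_eq => /eqP ->.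
pose A := p 0 0 * y 0 0 - p 1 0 * y 1 0; pose B := p 0 0 * y 1 0 + p 1 0 * y 0 0.
have /unit_combination [C [S [CS <-]]] : w ^+ 2 <= A ^+ 2 + B ^+ 2.
  have -> : A ^+ 2 + B ^+ 2 = (norm2 y * norm2 p) ^+ 2.
    by rewrite !norm2E exprMn !sqr_sqrtr ?addr_ge0 ?sqr_ge0 // /A /B; ring.
  by rewrite -real_normK ?num_real // !expr2; apply: ler_pM.
have [c [s [unit <- <-]]] := double_angle_surj CS.
exists (reflection c s); first exact: reflection_O2.
have P1 : dot2 y p = (c ^+ 2 + s ^+ 2) * dot2 y p by rewrite unit mul1r.
rewrite GfunE !gain0 !mulmx_cV2E !mxE /= P1 dot2E /m /k /A /B.
(* With [a^-1] and [b^-1] abstracted, the identity needs no [a, b != 0]. *)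
by move: a^-1 b^-1 => ia ib; field.
Qed.

Theorem mainTheorem14 (R : realType) (y p : 'cV[R]_2) (a b : R)
  (ha : 0 < a) (hb : 0 < b) :
  closure [set Gfun a b y p Q l | Q in @O2 R & l in [set l : R | 0 < l]] =
  [set x : R |
    (2^-1 * (a^-1 + b^-1) * dot2 y p
       - 2^-1 * `|a^-1 - b^-1| * norm2 y * norm2 p <= x) /\
    (x <= 2^-1 * (a^-1 + b^-1) * dot2 y p
       + 2^-1 * `|a^-1 - b^-1| * norm2 y * norm2 p)].
Proof.
set G := [set _ | _ in _ & _ in _]; set I := [set x | _ /\ _].
apply/seteqP; split.
- have closed_I : closed I by apply: closedI; [exact: closed_ge | exact: closed_le].
  rewrite ((closure_id I).1 closed_I); apply: closureS => _ [Q QQ [l l_gt0 <-]].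
  by have := Gfun_dev y p ha hb QQ (ltW l_gt0); rewrite ler_distl => /andP[].
- move=> x [lo hi]; have [|Q QQ <-] := @Gfun0_attains _ a b y p x.
    by rewrite ler_distl lo hi.
  apply: (closed_cvg _ (@closed_closure _ G) _ _
    (Gfun_cvg0 (lt0r_neq0 ha) (lt0r_neq0 hb))).
  near=> l; apply: subset_closure; exists Q => //; exists l => //.
  by near: l; exact: nbhs_right_gt.
Unshelve. all: end_near.
Qed.
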